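(* Let $(E,p,X)$ be an étalé space with $X$ a Boolean space. Then $(E,p,X)$ is isomorphic to its double dual $E^{\ast\ast}\to X^{\ast\ast}$ via the map $\beta\colon E\to E^{\ast\ast}$, $a\mapsto K_a=\{x\in E^{\ast}: a\in x\}$ (together with $X\to X^{\ast\ast}$, $u\mapsto N_u=\{y\in X^{\ast}: u\in y\}$).
   Context: A Boolean space is a Hausdorff space with a basis of compact-open sets. An étalé space $(E,p,X)$ is a surjective local homeomorphism $p\colon E\to X$. Its dual Boolean set is $\widetilde p\colon E^{\ast}\to X^{\ast}$, where $X^{\ast}$ is the Boolean algebra of compact-open subsets of $X$, $E^{\ast}$ the set of compact-open local sections (open sets on which $p$ is injective), $\widetilde p(C)=p(C)$, with order $C\le D$ iff $C\subseteq D$ (equivalently $C=D\cap p^{-1}(p(C))$). The dual étalé space of a Boolean set $q\colon Y\to B$ is $\widetilde q\colon Y^{\ast}\to B^{\ast}$ where $Y^{\ast}$ is the set of ultrafilters (maximal proper non-empty down-directed upward-closed subsets) of $Y$ with basis $L(a)=\{G:a\in G\}$, $B^{\ast}$ the ultrafilters of $B$ with basis $M(b)=\{F:b\in F\}$, and $\widetilde q(G)=q(G)$. $E^{\ast\ast}\to X^{\ast\ast}$ is the dual étalé space of $E^{\ast}\to X^{\ast}$. Two étalé spaces $(E,f,X)$, $(F,g,Y)$ are isomorphic if there are homeomorphisms $\varphi\colon E\to F$, $\psi\colon X\to Y$ with $g\varphi=\psi f$. *)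

From HB Require Import structures.
From mathcomp Require Import all_boot all_classical topology.
Set Implicit Arguments. Unset Strict Implicit. Unset Printing Implicit Defensive.
Local Open Scope classical_set_scope.

Definition compact_open (T : topologicalType) (A : set T) : Prop :=
  compact A /\ open A.

Definition boolean_space (T : topologicalType) : Prop :=
  hausdorff_space T /\
  (forall (U : set T) (x : T), open U -> U x ->
     exists B : set T, compact_open B /\ B x /\ B `<=` U).

Definition local_homeomorphism (E X : topologicalType) (p : E -> X) : Prop :=
  forall e : E, exists U : set E,
    [/\ open U, U e, open (p @` U), {in U &, injective p} &
        ({within U, continuous p} /\
         (forall V : set E, open V -> V `<=` U -> open (p @` V)))].

Definition etale (E X : topologicalType) (p : E -> X) : Prop :=
  (forall u : X, exists e : E, p e = u) /\ local_homeomorphism p.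

Definition Xstar (X : topologicalType) : Type := {V : set X | compact_open V}.

(* E^* : compact-open local sections (compact-open sets on which p is injective) *)
Definition Estar (E X : topologicalType) (p : E -> X) : Type :=
  {C : set E | compact_open C /\ {in C &, injective p}}.

Definition dual_img (E X : topologicalType) (p : E -> X)
  (G : set (Estar p)) : set (Xstar X) :=
  fun y => exists2 C : Estar p, G C & proj1_sig y = p @` proj1_sig C.

Definition filter_of (Y : Type) (le : Y -> Y -> Prop) (G : set Y) : Prop :=
  [/\ G !=set0,
      G <> setT,
      (forall a b, G a -> G b -> exists2 c, G c & le c a /\ le c b)
    & (forall a b, G a -> le a b -> G b)].

Definition ultrafilter_of (Y : Type) (le : Y -> Y -> Prop) (G : set Y) : Prop :=
  filter_of le G /\ (forall H : set Y, filter_of le H -> G `<=` H -> H = G).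

Definition Estar_le (E X : topologicalType) (p : E -> X) (C D : Estar p) : Prop :=
  proj1_sig C `<=` proj1_sig D.
Definition Xstar_le (X : topologicalType) (U V : Xstar X) : Prop :=
  proj1_sig U `<=` proj1_sig V.

Definition Estarstar (E X : topologicalType) (p : E -> X) : Type :=
  {G : set (Estar p) | ultrafilter_of (@Estar_le E X p) G}.
Definition Xstarstar (X : topologicalType) : Type :=
  {F : set (Xstar X) | ultrafilter_of (@Xstar_le X) F}.

(* topology generated by a basis: opens are unions of basic sets *)
Definition basis_open (Z I : Type) (L : I -> set Z) (W : set Z) : Prop :=
  forall z, W z -> exists i, L i z /\ L i `<=` W.

Definition Lbasic (E X : topologicalType) (p : E -> X) (a : Estar p)
  : set (Estarstar p) := fun G => proj1_sig G a.
Definition Mbasic (X : topologicalType) (b : Xstar X) : set (Xstarstar X) :=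
  fun F => proj1_sig F b.

Definition homeo (A B : Type) (openA : set A -> Prop) (openB : set B -> Prop)
  (f : A -> B) : Prop :=
  bijective f /\
  (forall V : set B, openB V -> openA (f @^-1` V)) /\
  (forall U : set A, openA U -> openB (f @` U)).

Definition Kset (E X : topologicalType) (p : E -> X) (a : E) : set (Estar p) :=
  fun x => proj1_sig x a.
Definition Nset (X : topologicalType) (u : X) : set (Xstar X) :=
  fun y => proj1_sig y u.

Arguments Kset [E X] p a _.
Arguments dual_img [E X] p G _.
Arguments Estar [E X] p.
Arguments Estarstar [E X] p.
Arguments Lbasic [E X] p a _.

From Pilot Require Import Defs.
From mathcomp Require Import all_boot all_classical topology.
Set Implicit Arguments. Unset Strict Implicit. Unset Printing Implicit Defensive.
Local Open Scope classical_set_scope.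

(* A space T is recovered from a basis of open sets P, ordered by inclusion,
   as soon as P separates points, each member of P is relatively closed in the
   larger ones, and every down-directed family of nonempty members has a common
   point: then a |-> {C in P | a \in C} is a homeomorphism onto the space of
   ultrafilters of P.  For a Boolean space X the compact-open sets form such a
   basis, and for an etale space p : E -> X so do the compact-open local
   sections, the properties being transported along the local homeomorphism p.
   Finally p~(K_a) = N_(p a) because every compact-open V containing p a lifts
   to a section through a: sections through a whose images lie in V can be
   glued, so their images form an up-directed open cover of V, and compactness
   of V produces a single one covering V. *)

Definition down_directed (T : Type) (F : set (set T)) : Prop :=
  forall A B, F A -> F B -> exists2 C, F C & C `<=` A `&` B.

Definition up_directed (T : Type) (F : set (set T)) : Prop :=
  forall A B, F A -> F B -> exists2 C, F C & A `|` B `<=` C.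

Lemma inj_surj_bijective (A B : Type) (f : A -> B) :
  injective f -> (forall b, exists a, f a = b) -> bijective f.
Proof.
move=> f_inj f_surj; pose g b := proj1_sig (cid (f_surj b)).
have gK b : f (g b) = b by rewrite /g; case: cid.
by exists g => // a; apply: f_inj; rewrite gK.
Qed.

Lemma open_of_nbhs (T : topologicalType) (S : set T) :
  (forall x, S x -> exists2 U, open_nbhs x U & U `<=` S) -> open S.
Proof.
move=> S_nbhs; rewrite openE => x /S_nbhs [U xU US].
exact: filterS US (open_nbhs_nbhs xU).
Qed.

Lemma hausdorff_open_sep (T : topologicalType) : hausdorff_space T ->
  forall x y : T, x <> y -> exists U, [/\ open U, U x & ~ U y].
Proof.
rewrite open_hausdorff => T_sep x y /eqP xy.
have [[A B] /= [xA yB] [oA oB /eqP AB0]] := T_sep x y xy.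
exists A; split => //; first exact: set_mem.
move=> Ay; have : (A `&` B) y by split=> //; exact: set_mem.
by rewrite AB0.
Qed.

Lemma closed_directed_meet (T : topologicalType) (F : set (set T)) (C0 : set T) :
  F C0 -> compact C0 -> (forall C, F C -> closed C) ->
  (forall C, F C -> C !=set0) -> down_directed F -> \bigcap_(C in F) C !=set0.
Proof.
move=> FC0 cC0 F_closed F_neq0 F_dir.
have F_proper : ProperFilter (filter_from F id).
  apply: filter_from_proper => //.
  by apply: filter_from_filter; [exists C0|exact: F_dir].
have F_mem C : F C -> filter_from F id C by exists C.
have [x [_ x_cluster]] := cC0 _ F_proper (F_mem C0 FC0).
exists x => C FC; apply: (F_closed C FC) => B xB.
exact: x_cluster (F_mem C FC) xB.
Qed.

Lemma compact_directed_cover (T : topologicalType) (A : set T) (F : set (set T)) :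
  compact A -> (forall V, F V -> open V) -> F !=set0 -> up_directed F ->
  A `<=` \bigcup_(V in F) V -> exists2 V, F V & A `<=` V.
Proof.
move=> cA F_open [V0 FV0] F_dir AF; apply: contrapT => A_uncovered.
have F_proper : ProperFilter (filter_from F (fun V => A `\` V)).
  apply: filter_from_proper.
    apply: filter_from_filter; first by exists V0.
    move=> V1 V2 FV1 FV2; have [V FV sV] := F_dir _ _ FV1 FV2.
    by exists V => // x [Ax nVx]; split; split => // ?; apply: nVx; apply: sV; [left|right].
  move=> V FV; apply: contrapT => AV0; apply: A_uncovered; exists V => // x Ax.
  by apply: contrapT => nVx; apply: AV0; exists x.
have F_mem V : F V -> filter_from F (fun V => A `\` V) (A `\` V) by exists V.
have [x [Ax x_cluster]] := cA _ F_proper (filterS (@subDsetl _ A V0) (F_mem V0 FV0)).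
have [V FV Vx] := AF x Ax.
have [z [[_ nVz] Vz]] :=
  x_cluster _ V (F_mem V FV) (open_nbhs_nbhs (conj (F_open V FV) Vx)).
exact: nVz Vz.
Qed.

Section PointUltrafilters.
Variables (T : topologicalType) (P : set T -> Prop).

Definition Pset : Type := {C : set T | P C}.
Definition Pset_le (C D : Pset) : Prop := proj1_sig C `<=` proj1_sig D.
Definition point_filter (a : T) : set Pset := fun C => proj1_sig C a.
Definition Pultrafilter : Type := {G : set Pset | ultrafilter_of Pset_le G}.
Definition Pbasic (C : Pset) : set Pultrafilter := fun G => proj1_sig G C.

Hypothesis P_set0 : P set0.
Hypothesis P_open : forall C, P C -> open C.
Hypothesis P_basis : forall (U : set T) a, open U -> U a ->
  exists C, [/\ P C, C a & C `<=` U].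
Hypothesis P_diff_open : forall C D, P C -> P D -> C `<=` D -> open (D `\` C).
Hypothesis P_directed_meet : forall F : set (set T), (forall C, F C -> P C) ->
  F !=set0 -> (forall C, F C -> C !=set0) -> down_directed F ->
  \bigcap_(C in F) C !=set0.
Hypothesis P_separates : forall a b : T, a <> b -> exists C, [/\ P C, C a & ~ C b].

Lemma filter_mem_neq0 (G : set Pset) (C : Pset) :
  filter_of Pset_le G -> G C -> proj1_sig C !=set0.
Proof.
move=> [_ G_proper _ G_up] GC; apply: contrapT => C0; apply: G_proper.
apply/seteqP; split => // D _; apply: G_up GC _ => x Cx.
by exfalso; apply: C0; exists x.
Qed.

Lemma point_filter_filter a : filter_of Pset_le (point_filter a).
Proof.
split.
- by have [C [PC Ca _]] := P_basis openT (I : setT a); exists (exist _ C PC).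
- move=> aT; have : point_filter a (exist _ set0 P_set0) by rewrite aT.
  by [].
- move=> [C1 P1] [C2 P2] /= C1a C2a.
  have [C [PC Ca sC]] := P_basis (openI (P_open P1) (P_open P2)) (conj C1a C2a).
  by exists (exist _ C PC) => //; split=> x /sC [].
- by move=> [C1 P1] [C2 P2] /= C1a; apply.
Qed.

(* If C in H avoids a, refine C and a basic D around a to c in H; as c is
   relatively closed in D, some member of point_filter a lies in D \ c and is
   disjoint from c, contradicting properness of H. *)
Lemma point_filter_maximal a (H : set Pset) :
  filter_of Pset_le H -> point_filter a `<=` H -> H `<=` point_filter a.
Proof.
move=> H_filter aH; have [_ _ H_dir _] := H_filter.
move=> C HC; apply: contrapT => nCa.
have [D [PD Da _]] := P_basis openT (I : setT a).
have [c Hc [cC cD]] := H_dir _ _ HC (aH (exist _ D PD) Da).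
have nca : ~ proj1_sig c a by move=> /cC.
have [D' [PD' D'a D'_sub]] := P_basis (P_diff_open (proj2_sig c) PD cD) (conj Da nca).
have [c' Hc' [c'c c'D']] := H_dir _ _ Hc (aH (exist _ D' PD') D'a).
have [x c'x] := filter_mem_neq0 H_filter Hc'.
by have [_] := D'_sub x (c'D' x c'x); apply; exact: c'c x c'x.
Qed.

Lemma point_filter_ultra a : ultrafilter_of Pset_le (point_filter a).
Proof.
split; first exact: point_filter_filter.
move=> H H_filter aH; apply/seteqP; split => //.
exact: point_filter_maximal.
Qed.

Lemma ultrafilter_point_filter (G : set Pset) :
  ultrafilter_of Pset_le G -> exists a, G = point_filter a.
Proof.
move=> [G_filter G_max]; have [[C0 GC0] _ G_dir _] := G_filter.
have [a Ga] : \bigcap_(C in @proj1_sig _ _ @` G) C !=set0.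
  apply: P_directed_meet.
  - by move=> _ [C _ <-]; exact: proj2_sig.
  - by exists (proj1_sig C0), C0.
  - by move=> _ [C GC <-]; exact: filter_mem_neq0 G_filter GC.
  - move=> _ _ [C1 GC1 <-] [C2 GC2 <-]; have [C GC [C1C C2C]] := G_dir _ _ GC1 GC2.
    by exists (proj1_sig C); [exists C|move=> x Cx; split; [apply: C1C|apply: C2C]].
exists a; symmetry; apply: G_max; first exact: point_filter_filter.
by move=> C GC; apply: Ga; exists C.
Qed.

Definition point_ultrafilter (a : T) : Pultrafilter :=
  exist _ (point_filter a) (point_filter_ultra a).

Lemma point_ultrafilter_inj : injective point_ultrafilter.
Proof.
move=> a b /(congr1 (@proj1_sig _ _)) /= ab; apply: contrapT => /P_separates.
move=> [C [PC Ca nCb]]; apply: nCb.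
by have : point_filter a (exist _ C PC) by []; rewrite ab.
Qed.

Lemma point_ultrafilter_surj (G : Pultrafilter) : exists a, point_ultrafilter a = G.
Proof.
have [a Ga] := ultrafilter_point_filter (proj2_sig G).
by exists a; case: G Ga => G G_ultra /= Ga; apply: eq_exist.
Qed.

Lemma image_point_ultrafilter (C : Pset) :
  point_ultrafilter @` proj1_sig C = Pbasic C.
Proof.
apply/seteqP; split => [_ [a Ca <-] //|G CG].
by have [a aG] := point_ultrafilter_surj G; exists a; rewrite // -aG in CG.
Qed.

Lemma point_ultrafilter_homeo : homeo open (basis_open Pbasic) point_ultrafilter.
Proof.
split; first exact: inj_surj_bijective point_ultrafilter_inj point_ultrafilter_surj.
split => [V V_open | U U_open].
  apply: open_of_nbhs => a /V_open [C [Ca CV]].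
  by exists (proj1_sig C) => [|x Cx]; [split; [exact: P_open (proj2_sig C)|]|exact: CV].
move=> _ [a Ua <-]; have [C [PC Ca CU]] := P_basis U_open Ua.
exists (exist _ C PC); split => //.
by rewrite -image_point_ultrafilter; exact: image_subset.
Qed.

Lemma ultrafilter_representation : exists2 beta : T -> Pultrafilter,
  (forall a, proj1_sig (beta a) = point_filter a) &
  homeo open (basis_open Pbasic) beta.
Proof. by exists point_ultrafilter => //; exact: point_ultrafilter_homeo. Qed.

End PointUltrafilters.

Lemma compact_injective_preimage (E X : topologicalType) (p : E -> X)
    (W : set E) (B : set X) :
  open W -> {in W &, injective p} ->
  (forall V, open V -> V `<=` W -> open (p @` V)) ->
  compact B -> B `<=` p @` W -> compact (W `&` p @^-1` B).
Proof.
move=> oW p_inj p_open cB BW F F_proper FC.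
have FB : F (p @^-1` B) by apply: filterS FC => z [].

have [y [By y_cluster]] := cB _ (fmap_proper_filter p F_proper) FB.
have [x Wx pxy] := BW y By.
exists x; split; first by split; rewrite //= pxy.
move=> A N FA; rewrite nbhsE => -[O [oO Ox] ON].
have pOW_nbhs : nbhs y (p @` (O `&` W)).
  apply: open_nbhs_nbhs; split; last by exists x.
  by apply: p_open; [exact: openI|exact: subIsetr].
have FAC : F (p @^-1` (p @` (A `&` (W `&` p @^-1` B)))).
  by apply: filterS (filterI FA FC) => z ACz; exists z.
have [w [[z [Az [Wz _]] pzw] [o [Oo Wo] pow]]] := y_cluster _ _ FAC pOW_nbhs.
have zo : z = o by apply: p_inj; rewrite ?inE // pzw pow.
by exists o; split; [rewrite -zo|apply: ON].
Qed.

Section LocalHomeomorphism.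
Variables (E X : topologicalType) (p : E -> X).
Hypothesis p_lh : local_homeomorphism p.

Lemma local_homeomorphism_continuous : continuous p.
Proof.
move=> x; have [W [oW Wx _ _ [pW_cont _]]] := p_lh x.
by move: pW_cont; rewrite continuous_open_subspace // => /(_ x (mem_set Wx)).
Qed.

Lemma local_homeomorphism_open (V : set E) : open V -> open (p @` V).
Proof.
move=> oV; apply: open_of_nbhs => _ [x Vx <-].
have [W [oW Wx _ _ [_ pW_open]]] := p_lh x.
exists (p @` (V `&` W)); last exact: image_subset (@subIsetl _ V W).
by split; [apply: pW_open; [exact: openI|exact: subIsetr]|exists x].
Qed.

End LocalHomeomorphism.

Section CompactOpenSections.
Variables (E X : topologicalType) (p : E -> X).
Hypotheses (p_etale : etale p) (X_boolean : boolean_space X).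

Let p_lh : local_homeomorphism p := proj2 p_etale.
Let p_cont : continuous p := local_homeomorphism_continuous p_lh.
Let X_hausdorff : hausdorff_space X := proj1 X_boolean.

Definition compact_open_section (C : set E) : Prop :=
  Defs.compact_open C /\ {in C &, injective p}.

Lemma preimage_open (V : set X) : open V -> open (p @^-1` V).
Proof. by move: V; apply/continuousP. Qed.

Lemma image_compact (C : set E) : compact C -> compact (p @` C).
Proof.
exact/continuous_compact/continuous_subspaceT.
Qed.

Lemma image_compact_closed (C : set E) : compact C -> closed (p @` C).
Proof. by move=> /image_compact; exact: compact_closed. Qed.

Lemma compact_open_section0 : compact_open_section set0.
Proof. by split; [split; [exact: compact0|exact: open0]|move=> x y /set_mem]. Qed.

Lemma compact_open_section_basis (U : set E) a : open U -> U a ->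
  exists C, [/\ compact_open_section C, C a & C `<=` U].
Proof.
move=> oU Ua; have [W [oW Wa _ p_inj [_ pW_open]]] := p_lh a.
have oUW : open (U `&` W) by exact: openI.
have pUW_open V : open V -> V `<=` U `&` W -> open (p @` V).
  by move=> oV VUW; apply: pW_open oV (subset_trans VUW (@subIsetr _ _ _)).
have [B [[cB oB] [Bpa BUW]]] :=
  proj2 X_boolean _ (p a) (pUW_open _ oUW (@subset_refl _ _)) (ex_intro2 _ _ a (conj Ua Wa) erefl).
have UW_inj : {in U `&` W &, injective p}.
  by move=> x y /set_mem[_ Wx] /set_mem[_ Wy]; apply: p_inj; exact: mem_set.
exists (U `&` W `&` p @^-1` B); split => //; last by move=> x [[]].
split; [split|].
- exact: compact_injective_preimage.
- by apply: openI => //; exact: preimage_open.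
- by move=> x y /set_mem[UWx _] /set_mem[UWy _]; apply: UW_inj; exact: mem_set.
Qed.

Lemma compact_open_section_diff_open (C D : set E) :
  compact_open_section C -> compact_open_section D -> C `<=` D -> open (D `\` C).
Proof.
move=> [[cC _] _] [[_ oD] D_inj] CD.
have -> : D `\` C = D `&` p @^-1` (~` (p @` C)).
  apply/seteqP; split=> x [Dx nCx]; split => //.
    move=> [y Cy pyx]; apply: nCx.
    have -> : x = y by apply: D_inj; [exact: mem_set|exact/mem_set/CD|].
    exact: Cy.
  by move=> Cx; apply: nCx; exists x.
by apply: openI => //; apply/preimage_open/closed_openC/image_compact_closed.
Qed.

(* Project to [X], where compactness and the Hausdorff property give a common
   point [u]; it lifts uniquely into each section of the family. *)
Lemma compact_open_section_directed_meet (F : set (set E)) :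
  (forall C, F C -> compact_open_section C) -> F !=set0 ->
  (forall C, F C -> C !=set0) -> down_directed F -> \bigcap_(C in F) C !=set0.
Proof.
move=> F_sec [C0 FC0] F_neq0 F_dir.
have F_compact C : F C -> compact C by move=> /F_sec [[]].
have [u pFu] : \bigcap_(V in [set p @` C | C in F]) V !=set0.
  apply: (@closed_directed_meet _ _ (p @` C0)); first by exists C0.
  - exact/image_compact/F_compact.
  - by move=> _ [C FC <-]; exact/image_compact_closed/F_compact.
  - by move=> _ [C /F_neq0 [x Cx] <-]; exists (p x), x.
  - move=> _ _ [C1 FC1 <-] [C2 FC2 <-]; have [C FC CC12] := F_dir _ _ FC1 FC2.
    exists (p @` C); first by exists C.
    by move=> _ [x Cx <-]; have [C1x C2x] := CC12 x Cx; split; exists x.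
have [a C0a pa] := pFu (p @` C0) (ex_intro2 _ _ C0 FC0 erefl).
exists a => C FC; have [C' FC' C'CC0] := F_dir _ _ FC FC0.
have [x C'x px] := pFu (p @` C') (ex_intro2 _ _ C' FC' erefl).
have [Cx C0x] := C'CC0 x C'x.
have -> : a = x by apply: (proj2 (F_sec _ FC0)); rewrite ?inE // pa px.
exact: Cx.
Qed.

Lemma compact_open_section_separates a b : a <> b ->
  exists C, [/\ compact_open_section C, C a & ~ C b].
Proof.
move=> ab; have [D [D_sec Da _]] := compact_open_section_basis openT (I : setT a).
have [Db|nDb] := pselect (D b); last by exists D.
have pab : p a <> p b.
  by move=> pab; apply: ab; apply: (proj2 D_sec); rewrite ?inE.
have [V [oV Va nVb]] := hausdorff_open_sep X_hausdorff pab.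
have oDV : open (D `&` p @^-1` V).
  by apply: openI; [exact: (proj2 (proj1 D_sec))|exact: preimage_open].
have [C [C_sec Ca CDV]] := compact_open_section_basis oDV (conj Da Va).
by exists C; split => // /CDV [].
Qed.

(* Glue [C2] onto [C1] over the part of [X] not already covered by [C1]. *)
Lemma compact_open_section_union (C1 C2 : set E) :
  compact_open_section C1 -> compact_open_section C2 -> exists C,
  [/\ compact_open_section C, C1 `<=` C & p @` C = p @` C1 `|` p @` C2].
Proof.
move=> C1_sec [[cC2 oC2] C2_inj]; have [[cC1 oC1] C1_inj] := C1_sec.
have pC1_closed := image_compact_closed cC1.
have pC1_open := local_homeomorphism_open p_lh oC1.
exists (C1 `|` (C2 `&` p @^-1` (~` (p @` C1)))); split; first split; first split.
- apply: compactU => //; apply: compact_closedI => //.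
  by apply: preimage_closed => [x _|]; [exact: p_cont|rewrite closedC].
- by apply/openU/openI => //; apply/preimage_open/closed_openC.
- move=> x y /set_mem[C1x|[C2x nx]] /set_mem[C1y|[C2y ny]] pxy.
  + by apply: C1_inj; rewrite ?inE.
  + by exfalso; apply: ny; exists x.
  + by exfalso; apply: nx; exists y.
  + by apply: C2_inj; rewrite ?inE.
- by move=> x C1x; left.
- apply/seteqP; split => [_ [x [C1x|[C2x _]] <-]|_ [[x C1x <-]|[x C2x <-]]].
  + by left; exists x.
  + by right; exists x.
  + by exists x => //; left.
  + have [[y C1y pyx]|npx] := pselect ((p @` C1) (p x)).
      by exists y => //; left.
    by exists x => //; right.
Qed.

Lemma compact_open_section_through a (V : set X) : Defs.compact_open V -> V (p a) ->
  exists C, [/\ compact_open_section C, C a & p @` C = V].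
Proof.
move=> [cV oV] Vpa.
pose good := [set C | [/\ compact_open_section C, C a & p @` C `<=` V]].
have [D0 [D0_sec D0a D0V]] := compact_open_section_basis (preimage_open oV) Vpa.
have D0_good : good D0 by split => // _ [x /D0V Vpx <-].
have good_union C1 C2 : good C1 -> compact_open_section C2 -> p @` C2 `<=` V ->
    exists2 C, good C & p @` C = p @` C1 `|` p @` C2.
  move=> [C1_sec C1a C1V] C2_sec C2V.
  have [C [C_sec C1C pC]] := compact_open_section_union C1_sec C2_sec.
  by exists C => //; split; [|exact: C1C|rewrite pC => x [/C1V|/C2V]].
have [_ [C [C_sec Ca CV] <-] VC] : exists2 W, [set p @` C | C in good] W & V `<=` W.
  apply: compact_directed_cover => //.
  - by move=> _ [C [[[_ oC] _] _ _] <-]; exact: local_homeomorphism_open.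
  - by exists (p @` D0), D0.
  - move=> _ _ [C1 C1_good <-] [C2 [C2_sec _ C2V] <-].
    have [C C_good pC] := good_union _ _ C1_good C2_sec C2V.
    by exists (p @` C); [exists C|rewrite pC].
  - move=> u Vu; have [e pe] := proj1 p_etale u; rewrite -pe in Vu *.
    have [D [D_sec De DV]] := compact_open_section_basis (preimage_open oV) Vu.
    have pDV : p @` D `<=` V by move=> _ [x /DV Vpx <-].
    have [C C_good pC] := good_union _ _ D0_good D_sec pDV.
    by exists (p @` C); [exists C|rewrite pC; right; exists e].
by exists C; split => //; apply/seteqP; split.
Qed.

Lemma etale_ultrafilter_representation : exists2 beta : E -> Estarstar p,
  (forall a, proj1_sig (beta a) = Kset p a) & homeo open (basis_open (Lbasic p)) beta.
Proof.
apply: (ultrafilter_representation compact_open_section0) => [C [[_ oC] _] //||||].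
- exact: compact_open_section_basis.
- exact: compact_open_section_diff_open.
- exact: compact_open_section_directed_meet.
- exact: compact_open_section_separates.
Qed.

Lemma dual_img_Kset a : dual_img p (Kset p a) = Nset (p a).
Proof.
apply/funext => V; apply/propext; split => [[C Ca VC]|Vpa].
  by rewrite /Nset VC; exists a.
have [C [C_sec Ca pC]] := compact_open_section_through (proj2_sig V) Vpa.
by exists (exist _ C C_sec) => //=; rewrite pC.
Qed.

End CompactOpenSections.

Section BooleanSpace.
Variables (X : topologicalType).
Hypothesis X_boolean : boolean_space X.

Let X_hausdorff : hausdorff_space X := proj1 X_boolean.

Lemma compact_open_basis (U : set X) u : open U -> U u ->
  exists C, [/\ Defs.compact_open C, C u & C `<=` U].
Proof.
by move=> oU Uu; have [C [C_co [Cu CU]]] := proj2 X_boolean U u oU Uu; exists C.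
Qed.

Lemma compact_open_diff_open (C D : set X) :
  Defs.compact_open C -> Defs.compact_open D -> open (D `\` C).
Proof.
move=> [cC _] [_ oD]; apply: openI => //.
exact/closed_openC/(compact_closed X_hausdorff).
Qed.

Lemma compact_open_directed_meet (F : set (set X)) :
  (forall C, F C -> Defs.compact_open C) -> F !=set0 ->
  (forall C, F C -> C !=set0) -> down_directed F -> \bigcap_(C in F) C !=set0.
Proof.
move=> F_co [C0 FC0]; apply: (closed_directed_meet FC0); first by case: (F_co _ FC0).
by move=> C /F_co [cC _]; exact: compact_closed.
Qed.

Lemma compact_open_separates (u v : X) : u <> v ->
  exists C, [/\ Defs.compact_open C, C u & ~ C v].
Proof.
move=> /(hausdorff_open_sep X_hausdorff) [U [oU Uu nUv]].
have [C [C_co Cu CU]] := compact_open_basis oU Uu.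
by exists C; split => // /CU.
Qed.

Lemma boolean_ultrafilter_representation : exists2 gamma : X -> Xstarstar X,
  (forall u, proj1_sig (gamma u) = Nset u) & homeo open (basis_open (@Mbasic X)) gamma.
Proof.
have co_set0 : Defs.compact_open (@set0 X) by split; [exact: compact0|exact: open0].
apply: (ultrafilter_representation co_set0) => [C [] //||||].
- exact: compact_open_basis.
- by move=> C D C_co D_co _; exact: compact_open_diff_open.
- exact: compact_open_directed_meet.
- exact: compact_open_separates.
Qed.

End BooleanSpace.

Theorem proposition3p14 (E X : topologicalType) (p : E -> X) :
  etale p -> boolean_space X ->
  exists (beta : E -> Estarstar p) (gamma : X -> Xstarstar X),
    [/\ (forall a : E, proj1_sig (beta a) = Kset p a),
        (forall u : X, proj1_sig (gamma u) = Nset u),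
        homeo open (basis_open (@Lbasic E X p)) beta,
        homeo open (basis_open (@Mbasic X)) gamma &
        (forall a : E, dual_img p (proj1_sig (beta a)) = proj1_sig (gamma (p a)))].
Proof.
move=> p_etale X_boolean.
have [beta betaE beta_homeo] := etale_ultrafilter_representation p_etale X_boolean.
have [gamma gammaE gamma_homeo] := boolean_ultrafilter_representation X_boolean.
exists beta, gamma; split => // a.
by rewrite betaE gammaE; exact: dual_img_Kset.
Qed.
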